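(* Let $(x_n)_{n\in\mathbb{N}}$ be a strictly increasing sequence of nonnegative reals with $x_0=0$, let $x_0!=1$, $x_n!=x_1\cdots x_n$, and suppose $\mathcal{N}(t)=\sum_{n\ge0}t^n/x_n!$ has radius of convergence $R=\lim_{n\to\infty}x_{n+1}\in(0,\infty]$. Suppose there is a probability density $w$ on $[0,R)$ with $x_n!=\int_0^R t^n w(t)\,dt$ for all $n\in\mathbb{N}$, and for real $\nu\geq 0$ define $x_\nu!=\int_0^R t^\nu w(t)\,dt$ (assumed finite). For $k\in\mathbb{N}$ and $0\le t<R$ set $$\mathcal{S}_k(t)=\frac{1}{\mathcal{N}(t)}\sum_{n=0}^{\infty}\frac{x_{\frac{k}{2}+n}!}{x_n!\,x_{n+k}!}\,t^{n+k/2}.$$ Then $\mathcal{S}_k(t)\le 1$ for all $k\in\mathbb{N}$ and all $0\le t<R$. *)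

From HB Require Import structures.
From mathcomp Require Import all_boot all_order all_algebra.
From mathcomp Require Import all_classical all_reals all_analysis.
Set Implicit Arguments. Unset Strict Implicit. Unset Printing Implicit Defensive.
Import Order.TTheory GRing.Theory Num.Theory.
Import numFieldNormedType.Exports.
Local Open Scope classical_set_scope.
Local Open Scope ring_scope.

Definition xfact {R : realType} (x : nat -> R) (n : nat) : R :=
  \prod_(1 <= i < n.+1) x i.

Definition Ico0 {R : realType} (Rad : \bar R) : set R :=
  [set t | 0 <= t /\ (t%:E < Rad)%E].

Definition is_radius {R : realType} (a : nat -> R) (Rad : \bar R) : Prop :=
  (forall t : R, (`|t|%:E < Rad)%E -> cvgn (series (fun n => a n * t ^+ n))) /\
  (forall t : R, (Rad < `|t|%:E)%E -> ~ cvgn (series (fun n => a n * t ^+ n))).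

Definition Nser {R : realType} (x : nat -> R) (t : R) : R :=
  limn (series (fun n => t ^+ n / xfact x n)).

Definition xfactR {R : realType} (Rad : \bar R) (w : R -> R) (nu : R) : R :=
  fine (\int[@lebesgue_measure R]_(t in Ico0 Rad) (powR t nu * w t)%:E)%E.

(* S_k(t) = (1/N(t)) sum_{n>=0} x_{k/2+n}! / (x_n! x_{n+k}!) t^{n+k/2},
   the series (with nonnegative terms) being summed in the extended reals. *)
Definition Sk {R : realType} (x : nat -> R) (Rad : \bar R) (w : R -> R)
  (k : nat) (t : R) : \bar R :=
  ((Nser x t)^-1%:E *
   \sum_(n <oo) (xfactR Rad w (k%:R / 2 + n%:R) / (xfact x n * xfact x (n + k)%N)
                   * powR t (n%:R + k%:R / 2))%:E)%E.

From HB Require Import structures.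
From mathcomp Require Import all_boot all_order all_algebra.
From mathcomp Require Import all_classical all_reals all_analysis.
From mathcomp Require Import ring lra.
Import Order.TTheory GRing.Theory Num.Theory.
Import numFieldNormedType.Exports.
Local Open Scope classical_set_scope.
Local Open Scope ring_scope.

(** Pointwise AM-GM, [(s t)^(n+k/2) <= (s^n t^(n+k) + s^(n+k) t^n) / 2], integrated
    against [w] gives [x_{n+k/2}! t^(n+k/2) <= (t^(n+k) x_n! + t^n x_{n+k}!) / 2].  Hence
    the n-th term of the series [S_k(t) N(t)] is at most the mean of the n-th and (n+k)-th
    terms of [N(t)], and summing over n bounds the whole series by [N(t)]. *)

Lemma Ico0_measurable {R : realType} (Rad : \bar R) : measurable (Ico0 Rad).
Proof.
case: Rad => [r| |].
- have -> : Ico0 r%:E = [set` `[0, r[%R] :> set R.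
    apply/seteqP; split => t /=; rewrite in_itv /= ?lte_fin.
      by move=> [a b]; apply/andP; split => //; rewrite -lte_fin.
    by move=> /andP[a b]; split => //; rewrite lte_fin.
  exact: measurable_itv.
- have -> : Ico0 (+oo : \bar R) = [set` `[0, +oo[%R] :> set R.
    apply/seteqP; split => t /=; rewrite in_itv /= ?ltry andbT.
      by move=> [->].
    by move=> a; split => //; rewrite ltry.
  exact: measurable_itv.
- have -> : Ico0 (-oo : \bar R) = set0.
    by apply/seteqP; split => t //= -[_]; rewrite ltNge leNye.
  exact: measurable0.
Qed.

Lemma powR_addn {R : realType} (a r : R) (n : nat) : 0 <= a -> 0 <= r ->
  a `^ (n%:R + r) = a ^+ n * a `^ r.
Proof.
move=> a0 r0; have [->|an0] := eqVneq a 0.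
  case: n => [|n]; first by rewrite add0r expr0 mul1r.
  rewrite expr0n /= mul0r powR0 //.
  by rewrite gt_eqF // (@lt_le_trans _ _ (n.+1%:R)) ?ltr0n // lerDl.
by rewrite powRD ?an0 ?implybT // powR_mulrn.
Qed.

Lemma powR_half_sqr {R : realType} (a : R) (k : nat) : 0 <= a ->
  (a `^ (k%:R / 2)) ^+ 2 = a ^+ k.
Proof.
move=> a0; rewrite -powR_mulrn ?powR_ge0 // -powRrM divfK ?pnatr_eq0 //.
by rewrite powR_mulrn.
Qed.

Lemma powR_mid_le {R : realType} (s t : R) (n k : nat) : 0 <= s -> 0 <= t ->
  s `^ (n%:R + k%:R / 2) * t `^ (n%:R + k%:R / 2) <=
  (s ^+ n * t ^+ (n + k) + s ^+ (n + k) * t ^+ n) / 2.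
Proof.
move=> s0 t0; have k0 : 0 <= k%:R / 2 :> R by rewrite divr_ge0.
rewrite !powR_addn // !exprD -(powR_half_sqr _ k s0) -(powR_half_sqr _ k t0).
set p := s `^ _; set q := t `^ _; set a := s ^+ n; set b := t ^+ n.
have ab0 : 0 <= a * b by rewrite mulr_ge0 // exprn_ge0.
have : 0 <= a * b * (p - q) ^+ 2 by rewrite mulr_ge0 // sqr_ge0.
nra.
Qed.

Lemma xfact_gt0 {R : realType} (x : nat -> R) (n : nat) :
  0 <= x 0%N -> (forall i, x i < x i.+1) -> 0 < xfact x n.
Proof.
move=> x0 xinc; have x_gt0 i : 0 < x i.+1.
  elim: i => [|i IH]; first exact: le_lt_trans x0 (xinc 0%N).
  exact: lt_trans IH (xinc _).
by rewrite /xfact big_add1; apply: prodr_gt0 => i _; exact: x_gt0.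
Qed.

Lemma nneseries_mean_shift_le {R : realType} (a : nat -> R) (k : nat) :
  (forall n, 0 <= a n) ->
  (\sum_(n <oo) ((a n + a (n + k)%N) / 2)%:E <= \sum_(n <oo) (a n)%:E)%E.
Proof.
move=> a0; have a0E n : (0 <= (a n)%:E)%E by rewrite lee_fin.
have shift_le : (\sum_(n <oo) (a (n + k)%N)%:E <= \sum_(n <oo) (a n)%:E)%E.
  rewrite (@nneseries_addn _ (fun i => (a i)%:E)) //.
  rewrite [leRHS](@nneseries_split _ _ 0 k) ?add0n; last by move=> i _.
  by apply: leeDr; apply: sume_ge0.
have -> : (\sum_(n <oo) ((a n + a (n + k)%N) / 2)%:E =
    (2^-1)%:E * (\sum_(n <oo) (a n)%:E + \sum_(n <oo) (a (n + k)%N)%:E))%E.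
  rewrite -nneseriesD // -nneseriesZl; last by move=> n _; rewrite adde_ge0.
  by apply: eq_eseriesr => n _; rewrite -EFinD -EFinM mulrC.
apply: (@le_trans _ _ ((2^-1)%:E * (\sum_(n <oo) (a n)%:E + \sum_(n <oo) (a n)%:E))%E).
  by apply: lee_wpmul2l; [rewrite lee_fin invr_ge0 | exact: leeD].
have := @nneseries_ge0 _ (fun n => (a n)%:E) xpredT 0 (fun n _ _ => a0E n).
case: (\sum_(n <oo) _)%E => [r _| _|//]; last by rewrite leey.
by rewrite -EFinD -EFinM lee_fin; lra.
Qed.

Section MidMoment.
Variables (R : realType) (D : set R) (w : R -> R).
Hypothesis mD : measurable (D : set (g_sigma_algebraType R.-ocitv.-measurable)).
Hypothesis D_ge0 : forall s, D s -> 0 <= s.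
Hypothesis w_ge0 : forall s, D s -> 0 <= w s.
Hypothesis powR_w_integrable : forall nu : R, 0 <= nu ->
  (@lebesgue_measure R).-integrable D (EFin \o (fun s => s `^ nu * w s)).

Local Notation mu := (@lebesgue_measure R).

Let expr_w_integrable (m : nat) : mu.-integrable D (EFin \o (fun s => s ^+ m * w s)).
Proof.
have := powR_w_integrable _ (ler0n R m).
by apply: eq_integrable => // s /[!inE] /D_ge0 s0; rewrite /= powR_mulrn.
Qed.

Lemma Rintegral_mid_moment_le (n k : nat) (t : R) : 0 <= t ->
  Rintegral mu D (fun s => s `^ (k%:R / 2 + n%:R) * w s) * t `^ (n%:R + k%:R / 2) <=
  (t ^+ (n + k) * Rintegral mu D (fun s => s ^+ n * w s)
   + t ^+ n * Rintegral mu D (fun s => s ^+ (n + k) * w s)) / 2.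
Proof.
move=> t0; have nk0 : 0 <= k%:R / 2 + n%:R :> R by rewrite addr_ge0 ?divr_ge0.
have scale c f : mu.-integrable D (EFin \o f) ->
    mu.-integrable D (EFin \o (fun s => c * f s)).
  by move=> /(integrableZl mD c); apply: eq_integrable.
have -> : (t ^+ (n + k) * Rintegral mu D (fun s => s ^+ n * w s)
   + t ^+ n * Rintegral mu D (fun s => s ^+ (n + k) * w s)) / 2 =
  Rintegral mu D (fun s => t ^+ (n + k) / 2 * (s ^+ n * w s)
                          + t ^+ n / 2 * (s ^+ (n + k) * w s)).
  rewrite RintegralD ?RintegralZl //; try exact/scale/expr_w_integrable.
  by rewrite mulrDl !(mulrAC _ _ 2^-1).
rewrite [leLHS]mulrC -RintegralZl ?powR_w_integrable //; apply: le_Rintegral => //.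
- exact/scale/powR_w_integrable.
- have := integrableD mD (scale (t ^+ (n + k) / 2) _ (expr_w_integrable n))
                         (scale (t ^+ n / 2) _ (expr_w_integrable (n + k))).
  by apply: eq_integrable.
move=> s Ds; have s0 := D_ge0 _ Ds; have ws := w_ge0 _ Ds.
have := ler_wpM2r ws (powR_mid_le _ _ n k s0 t0).
rewrite (addrC (k%:R / 2)); nra.
Qed.

End MidMoment.

Arguments Rintegral_mid_moment_le {R D w}.

Lemma EFin_Nser {R : realType} (x : nat -> R) (Rad : \bar R) (t : R) :
  is_radius (fun n => (xfact x n)^-1) Rad -> (`|t|%:E < Rad)%E ->
  (Nser x t)%:E = (\sum_(n <oo) (t ^+ n / xfact x n)%:E)%E.
Proof.
move=> [cvgN _] /cvgN cvgNt.
have cvg_series : cvgn (series (fun n => t ^+ n / xfact x n)).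
  by under eq_fun do rewrite mulrC.
rewrite /Nser -EFin_lim //; apply: congr_lim; apply/funext => m /=.
by rewrite /series /= sumEFin.
Qed.

Theorem mainTheorem3 (R : realType) (x : nat -> R) (Rad : \bar R) (w : R -> R)
  (hx0 : x 0%N = 0)
  (hxnn : forall n, 0 <= x n)
  (hxinc : forall n, x n < x n.+1)
  (hRadpos : (0 < Rad)%E)
  (hRadlim : (fun n => (x n.+1)%:E) @ \oo --> Rad)
  (hRadN : is_radius (fun n => (xfact x n)^-1) Rad)
  (hwmeas : measurable_fun (Ico0 Rad) w)
  (hwnn : forall t, Ico0 Rad t -> 0 <= w t)
  (hwprob : (\int[@lebesgue_measure R]_(t in Ico0 Rad) (w t)%:E = 1)%E)
  (hmom : forall n : nat,
     (\int[@lebesgue_measure R]_(t in Ico0 Rad) (t ^+ n * w t)%:E)%E = (xfact x n)%:E)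
  (hfin : forall nu : R, 0 <= nu ->
     (@lebesgue_measure R).-integrable (Ico0 Rad) (fun t => (powR t nu * w t)%:E)) :
  forall (k : nat) (t : R), 0 <= t -> (t%:E < Rad)%E ->
    (Sk x Rad w k t <= 1)%E.
Proof.
move=> k t t0 tR.
have xf_gt0 n : 0 < xfact x n := xfact_gt0 x n (hxnn 0%N) hxinc.
pose a n := t ^+ n / xfact x n.
have a_ge0 n : 0 <= a n by rewrite divr_ge0 ?exprn_ge0 // ltW.
have Nt : (Nser x t)%:E = (\sum_(n <oo) (a n)%:E)%E.
  by rewrite (EFin_Nser _ _ _ hRadN) // ger0_norm.
have Nt_gt0 : 0 < Nser x t.
  rewrite -lte_fin Nt; apply: (lt_le_trans _ (@nneseries_lim_ge _ _ xpredT 0 1 _)).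
    by rewrite big_nat1 /a expr0 /xfact big_geq // divr1 lte01.
  by move=> i _ _; rewrite lee_fin.
have moment n :
    Rintegral (@lebesgue_measure R) (Ico0 Rad) (fun s => s ^+ n * w s) = xfact x n.
  by rewrite /Rintegral hmom.
have term_le n : xfactR Rad w (k%:R / 2 + n%:R) / (xfact x n * xfact x (n + k)%N)
                   * powR t (n%:R + k%:R / 2) <= (a n + a (n + k)%N) / 2.
  have := Rintegral_mid_moment_le (Ico0_measurable Rad) (fun s => @proj1 _ _)
                                   hwnn hfin n k t t0.
  rewrite !moment mulrAC => mid_le.
  apply: le_trans (ler_wpM2r _ mid_le) _; first by rewrite invr_ge0 mulr_ge0 ?ltW.
  by rewrite /a le_eqVlt; apply/orP; left; apply/eqP; field; rewrite !gt_eqF.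
rewrite /Sk; apply: (@le_trans _ _ ((Nser x t)^-1 * Nser x t)%:E); last first.
  by rewrite mulVf ?gt_eqF.
rewrite EFinM; apply: lee_wpmul2l; first by rewrite lee_fin invr_ge0 ltW.
rewrite Nt; apply: le_trans (nneseries_mean_shift_le a k a_ge0).
apply: lee_nneseries => [n _ _|n _]; rewrite lee_fin; last exact: term_le.
rewrite mulr_ge0 ?powR_ge0 // divr_ge0 //; last by rewrite mulr_ge0 // ltW.
by apply: Rintegral_ge0 => s /hwnn ws; rewrite mulr_ge0 ?powR_ge0.
Qed.
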